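(* Let $n>2$, $V=\mathbb{F}_2^n$, and let $W\le V$ with $\dim(W)=n-2$. Let $\phi\in\mathrm{Sym}(V)$ be an involution centralising $\sigma_W$ and such that $\phi$ maps no coset of $W$ in $V$ to itself. Then $\phi\in\mathrm{AGL}(V)$.
   Context: For $v\in V$, $\sigma_v:x\mapsto x+v$, and $\sigma_W=\{\sigma_w:w\in W\}$. Any permutation centralising $\sigma_W$ permutes the cosets of $W$. $\mathrm{AGL}(V)$ is the affine group of maps $x\mapsto xL+v$, $L\in\mathrm{GL}(V)$, $v\in V$. *)

From HB Require Import structures.
From mathcomp Require Import all_boot all_order all_algebra all_fingroup.
Set Implicit Arguments. Unset Strict Implicit. Unset Printing Implicit Defensive.
Import GRing.Theory.
Local Open Scope ring_scope.

(* V = F_2^n is modelled as row vectors 'rV['F_2]_n. *)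

Definition wcoset (n : nat) (W : {vspace 'rV['F_2]_n}) (x : 'rV['F_2]_n)
  : {set 'rV['F_2]_n} := [set y | y - x \in W].

(* phi centralises sigma_W = { x |-> x + w : w in W }. *)
Definition centralises_transl (n : nat) (W : {vspace 'rV['F_2]_n})
  (phi : {perm 'rV['F_2]_n}) : Prop :=
  forall w, w \in W -> forall x, phi (x + w) = phi x + w.

Definition in_AGL (n : nat) (phi : {perm 'rV['F_2]_n}) : Prop :=
  exists L : 'M['F_2]_n, exists v : 'rV['F_2]_n,
    L \in unitmx /\ forall x, phi x = x *m L + v.

From HB Require Import structures.
From mathcomp Require Import all_boot all_order all_algebra all_fingroup.
Set Implicit Arguments. Unset Strict Implicit. Unset Printing Implicit Defensive.
Import GRing.Theory.
Local Open Scope ring_scope.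

(* Write d(x) = phi x + x.  Centralising sigma_W makes d constant on cosets of
   W, and d x \notin W because phi fixes no coset; so phi induces a fixed-point
   free involution on the four cosets, i.e. a perfect matching of F_2^2, and
   every such matching is a translation: d x is constant modulo W.  Being
   invariant under phi as well, d is then constant on the cosets of the
   hyperplane U = W + <d 0>, hence affine, and so is phi = id + d. *)

Lemma F2_cases (c : 'F_2) : c = 0 \/ c = 1.
Proof.
case: c => [[|[|m]] //= lt_m2]; [left | right]; exact: val_inj.
Qed.

Lemma F2_addrr (V : lmodType 'F_2) (x : V) : x + x = 0.
Proof.
by rewrite -{1 2}[x]scale1r -scalerDl (_ : 1 + 1 = 0) ?scale0r //; apply: val_inj.
Qed.

(* Entrywise case analysis on 'F_2 decides identities between row vectors. *)
Ltac char2 := apply/rowP => ?; rewrite !mxE;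
  repeat match goal with |- context [fun_of_matrix ?A ?i ?j] =>
    case: (F2_cases (A i j)) => -> end;
  by apply/eqP.

Lemma dim_addv_line (K : fieldType) (vT : vectType K) (U : {vspace vT}) x :
  x \notin U -> \dim (U + <[x]>) = (\dim U).+1.
Proof.
move=> xU; apply/eqP; rewrite eqn_leq; apply/andP; split.
  apply: leq_trans (dimv_add_leqif U <[x]>) _.
  by rewrite dim_vline -addn1 leq_add2l leq_b1.
rewrite ltn_neqAle (dimv_leqif_sup (addvSl U <[x]>)) dimvS ?addvSl // andbT.
apply: contra xU => /subvP; apply.
by have := memv_add (mem0v U) (memv_line x); rewrite add0r.
Qed.

Lemma addv_line_fullv (K : fieldType) (vT : vectType K) (U : {vspace vT}) x :
  (\dim U).+1 = dim vT -> x \notin U -> (U + <[x]>)%VS = fullv.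
Proof.
by move=> dimU xU; apply/eqP; rewrite eqEdim subvf dimvf dim_addv_line // dimU leqnn.
Qed.

Lemma memv_add_lineF2 (vT : vectType 'F_2) (U : {vspace vT}) x z :
  z \in (U + <[x]>)%VS -> exists2 u, u \in U & z = u \/ z = u + x.
Proof.
case/memv_addP=> u Uu [_ /vlineP[c ->] ->]; exists u => //.
by case: (F2_cases c) => ->; [left; rewrite scale0r addr0 | right; rewrite scale1r].
Qed.

Lemma hyperplaneF2_addv (vT : vectType 'F_2) (U : {vspace vT}) x y :
  (\dim U).+1 = dim vT -> x \notin U -> y \notin U -> x + y \in U.
Proof.
move=> dimU xU yU; have := memvf y; rewrite -(addv_line_fullv dimU xU).
case/memv_add_lineF2=> u Uu [Ey | ->]; first by rewrite Ey Uu in yU.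
by rewrite addrC -addrA F2_addrr addr0.
Qed.

Lemma additive_F2_mulmx n (g : 'rV['F_2]_n -> 'rV['F_2]_n) :
  {morph g : x y / x + y} -> exists L : 'M['F_2]_n, forall x, g x = x *m L.
Proof.
move=> gD; have g0 : g 0 = 0 by apply: (@addrI _ (g 0)); rewrite -gD !addr0.
exists (\matrix_i g (delta_mx 0 i)) => x.
rewrite mulmx_sum_row {1}[x]row_sum_delta (big_morph g gD g0).
by apply: eq_bigr => i _; rewrite rowK; case: (F2_cases (x 0 i)) => ->;
  rewrite ?scale0r ?scale1r ?g0.
Qed.

Lemma dim_row (K : fieldType) n : dim 'rV[K]_n = n.
Proof. by rewrite dim_matrix mul1r. Qed.

Definition disp n (phi : {perm 'rV['F_2]_n}) x := phi x + x.

Section FixedPointFreeInvolution.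
Variables (n : nat) (W : {vspace 'rV['F_2]_n}) (phi : {perm 'rV['F_2]_n}).
Hypotheses (codimW : (\dim W).+2 = n) (phiK : involutive phi)
  (cen : centralises_transl W phi)
  (nofix : forall x : 'rV['F_2]_n, phi @: wcoset W x != wcoset W x).

Local Notation d := (disp phi).

Lemma phiE x : phi x = x + d x.
Proof. rewrite /disp; char2. Qed.

Lemma disp_phi x : d (phi x) = d x.
Proof. rewrite /disp phiK; char2. Qed.

Lemma phi_addW z x : z + x \in W -> phi z + phi x \in W.
Proof.
move=> Wzx; have -> : phi z = phi x + (z + x) by rewrite -(cen Wzx); congr (phi _); char2.
by have -> : phi x + (z + x) + phi x = z + x by char2.
Qed.

Lemma disp_addW z x : z + x \in W -> d z = d x.
Proof.
move=> Wzx; rewrite /disp; have -> : z = x + (z + x) by char2.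
rewrite cen //; char2.
Qed.

Lemma disp_notinW x : d x \notin W.
Proof.
apply: contra (nofix x) => Wdx.
rewrite eqEcard card_imset ?leqnn ?andbT; last exact: perm_inj.
apply/subsetP=> _ /imsetP[z Wzx ->]; rewrite /wcoset !inE in Wzx *.
have -> : phi z - x = (phi z + phi x) + d x by rewrite /disp; char2.
by rewrite memvD ?phi_addW // (_ : z + x = z - x) //; char2.
Qed.

(* Unless z lies in the coset of x or of phi x, the cosets of x, phi x, z and
   phi z are the four cosets of W, and z, phi z differ by d x modulo W. *)
Lemma disp_other_coset x z :
  z + x \notin W -> z + phi x \notin W -> d z + d x \in W.
Proof.
move=> Wzx Wzphix.
have zphix_shift : z + phi x = (z + x) + d x by rewrite [phi x]phiE; char2.
have phizx_shift : phi z + phi x = (phi z + x) + d x by rewrite [phi x]phiE; char2.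
have WdxN := disp_notinW x.
have Wdx_zx : z + x \notin (W + <[d x]>)%VS.
  apply/negP=> /memv_add_lineF2[w Ww [Ezx | Ezx]]; first by rewrite Ezx Ww in Wzx.
  by move: Wzphix; rewrite zphix_shift Ezx -addrA F2_addrr addr0 Ww.
have dimWdx : (\dim (W + <[d x]>)).+1 = dim 'rV['F_2]_n.
  by rewrite dim_row dim_addv_line.
have := memvf (phi z + x); rewrite -(addv_line_fullv dimWdx Wdx_zx).
case/memv_add_lineF2=> p /memv_add_lineF2[w Ww Ep] [Ephiz | Ephiz].
- case: Ep => Ep; rewrite Ep in Ephiz.
    by move: Wzphix; rewrite -{1}(phiK z) phi_addW // Ephiz.
  by move: Wzx; rewrite -(phiK z) -(phiK x) phi_addW // phizx_shift Ephiz
    -addrA F2_addrr addr0.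
- have Edz : d z = p by apply: (addIr (z + x)); rewrite -Ephiz /disp; char2.
  case: Ep => Ep; first by move: (disp_notinW z); rewrite Edz Ep Ww.
  by rewrite Edz Ep -addrA F2_addrr addr0.
Qed.

Lemma disp_add_inW x y : d x + d y \in W.
Proof.
have [Wyx | Wyx] := boolP (y + x \in W).
  by rewrite (disp_addW Wyx) F2_addrr mem0v.
have [Wyphix | Wyphix] := boolP (y + phi x \in W).
  by rewrite (disp_addW Wyphix) disp_phi F2_addrr mem0v.
by rewrite addrC disp_other_coset.
Qed.

Local Notation U := (W + <[d 0%R]>)%VS.

Lemma disp_addU z x : z + x \in U -> d z = d x.
Proof.
case/memv_add_lineF2=> w Ww [Ezx | Ezx]; first by apply: disp_addW; rewrite Ezx.
rewrite -(disp_phi x); apply: disp_addW.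
rewrite (_ : z + phi x = (z + x) + d x); last by rewrite [phi x]phiE; char2.
by rewrite Ezx -addrA memvD ?disp_add_inW.
Qed.

Lemma disp_affine x y : d (x + y) = d x + d y + d 0.
Proof.
have dimU : (\dim U).+1 = dim 'rV['F_2]_n.
  by rewrite dim_row dim_addv_line ?disp_notinW.
have [Ux | Ux] := boolP (x \in U).
  have -> : d x = d 0 by apply: disp_addU; rewrite addr0.
  have -> : d (x + y) = d y by apply: disp_addU; rewrite -addrA F2_addrr addr0.
  char2.
have [Uy | Uy] := boolP (y \in U).
  have -> : d y = d 0 by apply: disp_addU; rewrite addr0.
  have -> : d (x + y) = d x by apply: disp_addU; rewrite addrAC F2_addrr add0r.
  char2.
have -> : d (x + y) = d 0 by apply: disp_addU; rewrite addr0 hyperplaneF2_addv.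
have -> : d y = d x by apply: disp_addU; rewrite hyperplaneF2_addv.
char2.
Qed.

Lemma phi_in_AGL : in_AGL phi.
Proof.
pose g x := phi x + phi 0.
have gD : {morph g : x y / x + y} by move=> x y; rewrite /g !phiE disp_affine; char2.
have [L gL] := additive_F2_mulmx gD.
exists L, (phi 0); split; last by move=> x; rewrite -gL /g; char2.
have gK : involutive g by move=> x; rewrite gD /g !phiK; char2.
have LL : L *m L = 1%:M.
  by apply/row_matrixP=> i; rewrite !rowE mulmxA -!gL gK mulmx1.
by case: (mulmx1_unit LL).
Qed.

End FixedPointFreeInvolution.

Theorem mainTheorem6 (n : nat) (W : {vspace 'rV['F_2]_n})
  (phi : {perm 'rV['F_2]_n}) :
  (2 < n)%N ->
  \dim W = (n - 2)%N ->
  (phi * phi)%g = 1%g -> phi != 1%g ->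
  centralises_transl W phi ->
  (forall x : 'rV['F_2]_n, phi @: wcoset W x != wcoset W x) ->
  in_AGL phi.
Proof.
(* phi != 1 is implied by the hypothesis on cosets. *)
move=> n_gt2 dimW phi2 _ cen nofix.
have codimW : (\dim W).+2 = n by rewrite dimW -addn2 subnK // ltnW.
have phiK : involutive phi by move=> x; rewrite -permM phi2 perm1.
exact: phi_in_AGL codimW phiK cen nofix.
Qed.
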